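(* Let $A$ be an edge matrix over $\mathcal G$. Then $R_A=\overline{\operatorname{span}}\{\rho_i,\delta_i:i\in\mathcal G\}$ and $\mathfrak R_A=\operatorname{span}_{\mathbb Z}\{\rho_i,\delta_i:i\in\mathcal G\}$ (the additive group generated by the $\rho_i$ and $\delta_i$).
   Context: An edge matrix is a $0$-$1$ matrix $A$ whose index set $\mathcal G$ is the edge set of a directed graph, with $A(i,j)=1$ if the range of edge $i$ equals the source of edge $j$, and $A(i,j)=0$ otherwise. For $i\in\mathcal G$, $\rho_i(j)=A(i,j)$ is the $i$-th row of $A$ as a function on $\mathcal G$ and $\delta_i$ is the indicator function of $\{i\}$. $R_A$ is the $C^*$-subalgebra of $\ell^\infty(\mathcal G)$ generated by $\{\rho_i,\delta_i:i\in\mathcal G\}$, and $\mathfrak R_A$ is the subring of $\mathbb Z^{\mathcal G}$ generated by the same functions. *)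

From mathcomp Require Import all_boot all_order all_algebra.
From mathcomp Require Import complex reals.
Set Implicit Arguments. Unset Strict Implicit. Unset Printing Implicit Defensive.
Import Order.TTheory GRing.Theory Num.Theory.
Local Open Scope ring_scope.

Definition edge_matrix (V G : eqType) (src rng : G -> V) (i j : G) : bool :=
  rng i == src j.

Section Gens.
Variables (G : eqType) (K : pzRingType) (A : G -> G -> bool).

Definition rho (i : G) : G -> K := fun j => (A i j)%:R.
Definition delta (i : G) : G -> K := fun j => (i == j)%:R.
Definition gen (p : G + G) : G -> K :=
  match p with inl i => rho i | inr i => delta i end.
End Gens.

Section Cstar.
Variables (R : realType) (G : eqType).
Local Notation C := (R[i]).

Definition bounded (f : G -> C) : Prop := exists M : C, forall x, `|f x| <= M.

Definition is_Cstar_subalg (S : (G -> C) -> Prop) : Prop :=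
  (forall f, S f -> bounded f) /\
  S (fun _ => 0) /\
  (forall f g, S f -> S g -> S (fun x => f x + g x)) /\
  (forall (c : C) f, S f -> S (fun x => c * f x)) /\
  (forall f g, S f -> S g -> S (fun x => f x * g x)) /\
  (forall f, S f -> S (fun x => (f x)^*)) /\
  (forall f, bounded f ->
        (forall eps : C, 0 < eps -> exists g, S g /\ forall x, `|f x - g x| <= eps) ->
        S f).

Definition RA (A : G -> G -> bool) (f : G -> C) : Prop :=
  forall S, is_Cstar_subalg S -> (forall p, S (gen C A p)) -> S f.

Definition closed_span (A : G -> G -> bool) (f : G -> C) : Prop :=
  bounded f /\
  forall eps : C, 0 < eps -> exists s : seq (C * (G + G)),
    forall x, `|f x - \sum_(q <- s) q.1 * gen C A q.2 x| <= eps.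
End Cstar.

Section Zring.
Variable (G : eqType).

Definition is_subring (S : (G -> int) -> Prop) : Prop :=
  [/\ S (fun _ => 0),
      forall f g, S f -> S g -> S (fun x => f x - g x)
    & forall f g, S f -> S g -> S (fun x => f x * g x)].

Definition RingA (A : G -> G -> bool) (f : G -> int) : Prop :=
  forall S, is_subring S -> (forall p, S (gen int A p)) -> S f.

Definition Zspan (A : G -> G -> bool) (f : G -> int) : Prop :=
  exists s : seq (int * (G + G)),
    forall x, f x = \sum_(q <- s) q.1 * gen int A q.2 x.
End Zring.

From mathcomp Require Import all_boot all_order all_algebra.
From mathcomp Require Import complex reals ring.
From Stdlib Require Import FunctionalExtensionality.
Set Implicit Arguments. Unset Strict Implicit. Unset Printing Implicit Defensive.
Import Order.TTheory GRing.Theory Num.Theory.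
Local Open Scope ring_scope.

(* The product of two generators is again a generator times 0 or 1:
   rho_i rho_j = [r(i) = r(j)] rho_i, rho_i delta_j = A(i,j) delta_j and
   delta_i delta_j = [i = j] delta_i.  Hence the span of the generators, over
   C or over Z, is closed under multiplication, and (the generators being
   real) under conjugation: it is already a *-subring.  Its uniform closure
   is therefore a C*-subalgebra, and any C*-subalgebra (resp. subring)
   containing the generators contains the closed span (resp. the span). *)

Lemma eqfun_mem (T K : Type) (S : (T -> K) -> Prop) (f g : T -> K) :
  f =1 g -> S f -> S g.
Proof. by move/functional_extensionality ->. Qed.

Section Combinations.
Variables (G : eqType) (A : G -> G -> bool).

Definition comb (K : pzRingType) (s : seq (K * (G + G))) (x : G) : K :=
  \sum_(q <- s) q.1 * gen K A q.2 x.

Definition comb_mul_closed (K : pzRingType) : Prop :=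
  forall s t : seq (K * (G + G)), exists u, forall x, comb s x * comb t x = comb u x.

Variable K : pzRingType.
Implicit Types (s t : seq (K * (G + G))) (x : G).

Lemma comb_nil x : comb [::] x = 0 :> K.
Proof. by rewrite /comb big_nil. Qed.

Lemma comb_cons q s x : comb (q :: s) x = q.1 * gen K A q.2 x + comb s x.
Proof. by rewrite /comb big_cons. Qed.

Lemma comb_cat s t x : comb (s ++ t) x = comb s x + comb t x.
Proof. by rewrite /comb big_cat. Qed.

Lemma comb_scale c s x : comb [seq (c * q.1, q.2) | q <- s] x = c * comb s x.
Proof. by rewrite /comb big_map mulr_sumr; apply: eq_bigr => q _; rewrite mulrA. Qed.

Lemma comb_gen p x : comb [:: (1, p)] x = gen K A p x.
Proof. by rewrite /comb big_seq1 mul1r. Qed.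

Lemma comb_mem (S : (G -> K) -> Prop) :
    S (fun _ => 0) ->
    (forall f g, S f -> S g -> S (fun x => f x + g x)) ->
    (forall c f, S f -> S (fun x => c * f x)) ->
    (forall p, S (gen K A p)) ->
  forall s, S (comb s).
Proof.
move=> S0 SD SZ Sgen; elim=> [|q s IH].
  by apply: eqfun_mem S0 => x; rewrite comb_nil.
by apply: eqfun_mem (SD _ _ (SZ q.1 _ (Sgen q.2)) IH) => x; rewrite comb_cons.
Qed.

End Combinations.

Section EdgeMatrix.
Variables (V G : eqType) (src rng : G -> V).
Local Notation A := (edge_matrix src rng).

Definition prod_coef (p q : G + G) : bool :=
  match p, q with
  | inl i, inl j => rng i == rng j
  | inl i, inr j => rng i == src j
  | inr i, inl j => rng j == src i
  | inr i, inr j => i == j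
  end.

Definition prod_gen (p q : G + G) : G + G :=
  match p, q with
  | inl i, inl _ => inl i
  | inl _, inr j => inr j
  | inr i, _ => inr i
  end.

Lemma gen_mul (K : pzRingType) p q x :
  gen K A p x * gen K A q x = (prod_coef p q)%:R * gen K A (prod_gen p q) x.
Proof.
case: p q => i [] j; rewrite /= /rho /delta -!natrM !mulnb /edge_matrix; congr (_%:R).
- by case: (rng i =P src x) => [->|_]; rewrite ?eqxx ?andbT ?andbF // eq_sym.
- by case: (j =P x) => [->|_]; rewrite ?andbF.
- by case: (i =P x) => [->|_]; rewrite ?eqxx ?andbT ?andbF.
- by case: (i =P x) => [->|_]; rewrite ?eqxx ?andbT ?andbF // eq_sym.
Qed.

Lemma edge_comb_mul_closed (K : comPzRingType) : comb_mul_closed A K.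
Proof.
move=> s t; exists [seq (q.1 * r.1 * (prod_coef q.2 r.2)%:R, prod_gen q.2 r.2)
                   | q <- s, r <- t] => x.
rewrite /comb big_allpairs_dep mulr_suml; apply: eq_bigr => q _.
rewrite mulr_sumr; apply: eq_bigr => r _ /=.
by rewrite mulrACA gen_mul; ring.
Qed.

End EdgeMatrix.

Section IntSpan.
Variables (G : eqType) (A : G -> G -> bool).

Lemma ZspanP (f : G -> int) : Zspan A f <-> exists s, f = comb A s.
Proof. by split=> [[s /functional_extensionality ->]|[s ->]]; exists s. Qed.

Lemma Zspan_gen p : Zspan A (gen int A p).
Proof. by apply/ZspanP; exists [:: (1, p)]; apply/functional_extensionality => x; rewrite comb_gen. Qed.

Lemma Zspan_subring : comb_mul_closed A int -> is_subring (Zspan A).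
Proof.
move=> span_mul; split.
- by apply/ZspanP; exists [::]; apply/functional_extensionality => x; rewrite comb_nil.
- move=> _ _ /ZspanP[s ->] /ZspanP[t ->]; apply/ZspanP.
  exists (s ++ [seq (-1 * q.1, q.2) | q <- t]); apply/functional_extensionality => x.
  by rewrite comb_cat comb_scale mulN1r.
- move=> _ _ /ZspanP[s ->] /ZspanP[t ->]; apply/ZspanP.
  by have [u mul_st] := span_mul s t; exists u; apply/functional_extensionality.
Qed.

End IntSpan.

Section ZmodClosed.
Variables (T : Type) (S : (T -> int) -> Prop).
Hypotheses (S0 : S (fun _ => 0)) (SB : forall f g, S f -> S g -> S (fun x => f x - g x)).

Lemma zmod_closedD f g : S f -> S g -> S (fun x => f x + g x).
Proof. by move=> Sf Sg; apply: eqfun_mem (SB Sf (SB S0 Sg)) => x; rewrite sub0r opprK. Qed.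

Lemma zmod_closedZ (z : int) f : S f -> S (fun x => z * f x).
Proof.
move=> Sf; have Snat (n : nat) : S (fun x => n%:Z * f x).
  elim: n => [|n IH]; first by apply: eqfun_mem S0 => x; rewrite mul0r.
  by apply: eqfun_mem (zmod_closedD Sf IH) => x; rewrite intS mulrDl mul1r.
case: z => n; first exact: Snat.
by apply: eqfun_mem (SB S0 (Snat n.+1)) => x; rewrite NegzE mulNr sub0r.
Qed.

End ZmodClosed.

Lemma RingA_Zspan (G : eqType) (A : G -> G -> bool) (f : G -> int) :
  comb_mul_closed A int -> (RingA A f <-> Zspan A f).
Proof.
move=> span_mul; split=> [|/ZspanP[s ->] S [S0 SB _] Sgen].
  by apply; [exact: Zspan_subring | exact: Zspan_gen].
by apply: comb_mem => //; [exact: zmod_closedD | exact: zmod_closedZ].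
Qed.

Section Bounded.
Variables (R : realType) (G : eqType).
Local Notation C := R[i].
Implicit Types (f g : G -> C).

Lemma bounded_ge0 f : bounded f -> exists2 M : C, 0 <= M & forall x, `|f x| <= M.
Proof.
move=> [M leM]; exists `|M| => [|x]; first exact: normr_ge0.
by rewrite [`|M|]ger0_norm ?leM // (le_trans _ (leM x)).
Qed.

Lemma bounded_add f g : bounded f -> bounded g -> bounded (fun x => f x + g x).
Proof.
move=> /bounded_ge0[M _ leM] /bounded_ge0[N _ leN]; exists (M + N) => x.
exact: le_trans (ler_normD _ _) (lerD (leM x) (leN x)).
Qed.

Lemma bounded_scale (c : C) f : bounded f -> bounded (fun x => c * f x).
Proof.
by move=> /bounded_ge0[M _ leM]; exists (`|c| * M) => x; rewrite normrM ler_wpM2l.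
Qed.

Lemma bounded_mul f g : bounded f -> bounded g -> bounded (fun x => f x * g x).
Proof.
move=> /bounded_ge0[M _ leM] /bounded_ge0[N _ leN].
by exists (M * N) => x; rewrite normrM ler_pM.
Qed.

Lemma bounded_conj f : bounded f -> bounded (fun x => (f x)^*).
Proof. by move=> [M leM]; exists M => x; rewrite norm_conjC. Qed.

End Bounded.

Section Epsilons.
Variable F : numFieldType.
Implicit Types (a b e : F).

Lemma half_gt0 e : 0 < e -> 0 < e / 2.
Proof. by move=> e_gt0; rewrite divr_gt0 ?ltr0n. Qed.

Lemma ler_normD_half a b e : `|a| <= e / 2 -> `|b| <= e / 2 -> `|a + b| <= e.
Proof. by move=> lea leb; rewrite [e]splitr (le_trans (ler_normD _ _)) ?lerD. Qed.

Lemma exists_mul_le a e : 0 <= a -> 0 < e -> exists2 d, 0 < d & a * d <= e.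
Proof.
move=> a_ge0 e_gt0; have a1_gt0 : 0 < a + 1 by rewrite ltr_wpDl.
exists (e / (a + 1)); first by rewrite divr_gt0.
by rewrite mulrA ler_pdivrMr // mulrC ler_pM2l // lerDl.
Qed.

End Epsilons.

Section ClosedSpan.
Variables (R : realType) (G : eqType) (A : G -> G -> bool).
Local Notation C := R[i].
Implicit Types (f g : G -> C) (s t : seq (C * (G + G))).

Lemma gen_norm_le1 p x : `|gen C A p x| <= 1.
Proof.
by case: p => i; rewrite /= /rho /delta; [case: (A i x) | case: (i == x)];
  rewrite ?normr0 ?normr1.
Qed.

Lemma gen_conj p x : (gen C A p x)^* = gen C A p x.
Proof. by case: p => i; rewrite /= /rho /delta conjC_nat. Qed.

Lemma comb_norm s x : `|comb A s x| <= \sum_(q <- s) `|q.1|.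
Proof.
rewrite (le_trans (ler_norm_sum _ _ _)) // ler_sum // => q _.
by rewrite normrM ler_piMr ?gen_norm_le1.
Qed.

Lemma comb_conj s x : (comb A s x)^* = comb A [seq (q.1^*, q.2) | q <- s] x.
Proof.
rewrite /comb big_map rmorph_sum; apply: eq_bigr => q _.
by rewrite rmorphM; congr (_ * _); apply: gen_conj.
Qed.

Definition approximable f : Prop :=
  forall eps : C, 0 < eps -> exists s, forall x, `|f x - comb A s x| <= eps.

Lemma approximable_span s f : f =1 comb A s -> approximable f.
Proof. by move=> f_s e e_gt0; exists s => x; rewrite f_s subrr normr0 ltW. Qed.

Lemma approximable_closure f :
    (forall eps : C, 0 < eps -> exists2 g, approximable g & forall x, `|f x - g x| <= eps) ->
  approximable f.
Proof.
move=> near e e_gt0; have [g ag f_g] := near _ (half_gt0 e_gt0).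
have [s g_s] := ag _ (half_gt0 e_gt0); exists s => x.
by rewrite -(subrKA (g x)); exact: ler_normD_half (f_g x) (g_s x).
Qed.

Lemma approximable_add f g :
  approximable f -> approximable g -> approximable (fun x => f x + g x).
Proof.
move=> af ag e e_gt0.
have [s f_s] := af _ (half_gt0 e_gt0); have [t g_t] := ag _ (half_gt0 e_gt0).
exists (s ++ t) => x; rewrite comb_cat opprD addrACA.
exact: ler_normD_half (f_s x) (g_t x).
Qed.

Lemma approximable_scale (c : C) f : approximable f -> approximable (fun x => c * f x).
Proof.
move=> af e e_gt0; have [d d_gt0 cd_le] := exists_mul_le (normr_ge0 c) e_gt0.
have [s f_s] := af _ d_gt0; exists [seq (c * q.1, q.2) | q <- s] => x.
by rewrite comb_scale -mulrBr normrM (le_trans _ cd_le) ?ler_wpM2l.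
Qed.

Lemma approximable_conj f : approximable f -> approximable (fun x => (f x)^*).
Proof.
move=> af e e_gt0; have [s f_s] := af _ e_gt0.
by exists [seq (q.1^*, q.2) | q <- s] => x; rewrite -comb_conj -rmorphB norm_conjC.
Qed.

Hypothesis span_mul : comb_mul_closed A C.

(* f g - s t = f (g - t) + (f - s) t: t is chosen first, so that s can be
   chosen against the bound \sum |coefficients of t| on |t|. *)
Lemma approximable_mul f g :
  bounded f -> approximable f -> approximable g -> approximable (fun x => f x * g x).
Proof.
move=> /bounded_ge0[M M_ge0 leM] af ag e e_gt0.
have [d1 d1_gt0 Md1_le] := exists_mul_le M_ge0 (half_gt0 e_gt0).
have [t g_t] := ag _ d1_gt0.
have T_ge0 : 0 <= \sum_(q <- t) `|q.1| by rewrite sumr_ge0.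
have [d2 d2_gt0 Td2_le] := exists_mul_le T_ge0 (half_gt0 e_gt0).
have [s f_s] := af _ d2_gt0.
have [u st_u] := span_mul s t; exists u => x; rewrite -st_u.
have -> : f x * g x - comb A s x * comb A t x =
          f x * (g x - comb A t x) + (f x - comb A s x) * comb A t x by ring.
apply: ler_normD_half; rewrite normrM.
  exact: le_trans (ler_pM _ _ (leM x) (g_t x)) Md1_le.
by rewrite mulrC (le_trans (ler_pM _ _ (comb_norm t x) (f_s x))).
Qed.

Lemma closed_span_Cstar : is_Cstar_subalg (@closed_span R G A).
Proof.
split; first by move=> f [].
split.
  split; first by exists 0 => x; rewrite normr0.
  by apply: (approximable_span (s := [::])) => x; rewrite comb_nil.
split; first by move=> f g [bf af] [bg ag]; split; [exact: bounded_add | exact: approximable_add].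
split; first by move=> c f [bf af]; split; [exact: bounded_scale | exact: approximable_scale].
split; first by move=> f g [bf af] [bg ag]; split; [exact: bounded_mul | exact: approximable_mul].
split; first by move=> f [bf af]; split; [exact: bounded_conj | exact: approximable_conj].
move=> f bf near; split=> //; apply: approximable_closure => e e_gt0.
by have [g [[_ ag] f_g]] := near _ e_gt0; exists g.
Qed.

Lemma RA_closed_span f : RA A f <-> closed_span A f.
Proof.
split=> [|[bf af] S SCstar Sgen].
  apply; first exact: closed_span_Cstar.
  move=> p; split; first by exists 1 => x; apply: gen_norm_le1.
  by apply: (approximable_span (s := [:: (1, p)])) => x; rewrite comb_gen.
have [_ [S0 [SD [SZ [_ [_ Sclosed]]]]]] := SCstar.
apply: Sclosed => // e e_gt0; have [s f_s] := af _ e_gt0.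
by exists (comb A s); split; first exact: comb_mem.
Qed.

End ClosedSpan.

Theorem proposition5p1 (R : realType) (V G : eqType) (src rng : G -> V) :
  let A := edge_matrix src rng in
  (forall f : G -> R[i], RA A f <-> closed_span A f) /\
  (forall f : G -> int, RingA A f <-> Zspan A f).
Proof.
move=> A; split=> f.
  exact/RA_closed_span/edge_comb_mul_closed.
exact/RingA_Zspan/edge_comb_mul_closed.
Qed.
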